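(* Let $n>d+1$ and let $\mathcal{F}_1,\dots,\mathcal{F}_n$ be collections of axis-parallel boxes in $\mathbb{R}^d$ such that for all $i\neq j$, $B\in\mathcal{F}_i$ and $B'\in\mathcal{F}_j$ we have $B\cap B'\neq\emptyset$. Then there exist $i\in[n]$ and, for each $j\in[n]\setminus\{i\}$, a box $B_j\in\mathcal{F}_j$ such that $\mathcal{F}_i\cup\{B_j: j\in[n],\,j\neq i\}$ is $2$-pierceable.
   Context: An axis-parallel box in $\mathbb{R}^d$ is a set $[\alpha_1,\beta_1]\times\dots\times[\alpha_d,\beta_d]$ with real $\alpha_j\le\beta_j$. A family is $2$-pierceable if some set of at most $2$ points of $\mathbb{R}^d$ meets every member of it. *)

From HB Require Import structures.
From mathcomp Require Import all_boot all_order all_algebra.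
From mathcomp Require Import reals.
Set Implicit Arguments. Unset Strict Implicit. Unset Printing Implicit Defensive.
Import Order.TTheory GRing.Theory Num.Theory.
Local Open Scope ring_scope.

Record box (R : realType) (d : nat) := Box {
  lo : 'I_d -> R;
  hi : 'I_d -> R;
  lo_le_hi : forall k, lo k <= hi k
}.

Definition in_box (R : realType) (d : nat) (x : 'I_d -> R) (B : box R d) : Prop :=
  forall k : 'I_d, lo B k <= x k <= hi B k.

Definition boxes_meet (R : realType) (d : nat) (B B' : box R d) : Prop :=
  exists x : 'I_d -> R, in_box x B /\ in_box x B'.

(* A family (a predicate on boxes) is 2-pierceable: some set of at most 2 points
   (two possibly equal points p, q) meets every member. *)
Definition two_pierceable (R : realType) (d : nat) (F : box R d -> Prop) : Prop :=
  exists p q : 'I_d -> R, forall B, F B -> in_box p B \/ in_box q B.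

(** For every coordinate k at most one family contains two boxes whose k-th
    projections are disjoint: two such families would give four intervals
    ordered cyclically, contradicting the cross-intersection hypothesis.
    Since n > d, some family F_i is split in no coordinate, so its boxes
    pairwise meet in every projection and, by Helly's theorem on the line
    (applied coordinatewise), share a point p. Any choice of one box from
    each other family is pairwise intersecting, hence pierced by a second
    point q. *)

From HB Require Import structures.
From mathcomp Require Import all_boot all_order all_algebra.
From mathcomp Require Import reals.
From mathcomp Require Import boolp classical_sets.
Set Implicit Arguments. Unset Strict Implicit. Unset Printing Implicit Defensive.
Import Order.TTheory GRing.Theory Num.Theory.
Local Open Scope ring_scope.
Local Open Scope classical_set_scope.

Lemma exists_not_in_image (aT rT : finType) (f : aT -> rT) :
  (#|aT| < #|rT|)%N -> exists y, forall x, f x != y.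
Proof.
move=> card_lt; have [y /codomP y_notin] : exists y, y \notin codom f.
  apply/existsP; apply: contraTT card_lt.
  rewrite negb_exists => /forallP/= onto; rewrite -leqNgt -(size_codom f).
  apply: leq_trans (card_size _); apply: subset_leq_card.
  by apply/fintype.subsetP => y _; apply/negbNE/onto.
by exists y => x; apply/eqP => fx_y; apply: y_notin; exists x.
Qed.

Lemma boxes_meet_lo_le_hi (R : realType) (d : nat) (B B' : box R d) k :
  boxes_meet B B' -> lo B k <= hi B' k.
Proof.
by case=> x [/(_ k)/andP[loB _] /(_ k)/andP[_ hiB']]; exact: le_trans hiB'.
Qed.

(* Helly's theorem for boxes: the point whose coordinates are the suprema of
   the lower ends pierces every box. *)
Lemma box_helly (R : realType) (d : nat) (P : box R d -> Prop) :
  (forall B B', P B -> P B' -> forall k, lo B k <= hi B' k) ->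
  exists x : 'I_d -> R, forall B, P B -> in_box x B.
Proof.
move=> lo_le_hi_P.
have [[B0 PB0]|noP] := pselect (exists B, P B); last first.
  by exists (fun=> 0) => B PB; case: noP; exists B.
exists (fun k => sup [set lo B k | B in P]) => B PB k.
have los_ne : [set lo B k | B in P] !=set0 by exists (lo B0 k), B0.
have los_ub : forall b, P b -> ubound [set lo B k | B in P] (hi b k).
  by move=> b Pb _ [B' PB' <-]; exact: lo_le_hi_P.
apply/andP; split; last exact: ge_sup (los_ub B PB).
apply: sup_upper_bound; last by exists B.
by split=> //; exists (hi B0 k); exact: los_ub.
Qed.

Section CrossIntersectingFamilies.
Variables (R : realType) (d n : nat) (F : 'I_n -> box R d -> Prop).
Hypothesis F_cross : forall i j B B', i != j -> F i B -> F j B' -> boxes_meet B B'.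

Definition split_at (i : 'I_n) (k : 'I_d) :=
  exists B B', [/\ F i B, F i B' & hi B' k < lo B k].

Lemma split_at_uniq k i j : split_at i k -> split_at j k -> i = j.
Proof.
move=> [B1 [B2 [F1 F2 lt21]]] [B3 [B4 [F3 F4 lt43]]].
apply/eqP; apply: contraT => neq_ij.
have le14 := boxes_meet_lo_le_hi k (F_cross neq_ij F1 F4).
have neq_ji : j != i by rewrite eq_sym.
have le32 := boxes_meet_lo_le_hi k (F_cross neq_ji F3 F2).
by have := lt_trans lt21 (le_lt_trans le14 (lt_le_trans lt43 le32)); rewrite ltxx.
Qed.

Lemma unsplit_family_pierced i :
  (forall k, ~ split_at i k) -> exists p, forall B, F i B -> in_box p B.
Proof.
move=> unsplit_i; apply: box_helly => B B' FB FB' k.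
rewrite leNgt; apply/negP => lt_hi_lo.
by apply: (unsplit_i k); exists B, B'.
Qed.

Lemma transversal_pierced i (Bs : 'I_n -> box R d) :
  (forall j, j != i -> F j (Bs j)) ->
  exists q, forall B, (exists j, j != i /\ B = Bs j) -> in_box q B.
Proof.
move=> FBs; apply: box_helly => _ _ [j [ji ->]] [j' [j'i ->]] k.
have [<-|neq_jj'] := eqVneq j j'; first exact: lo_le_hi.
exact: boxes_meet_lo_le_hi (F_cross neq_jj' (FBs j ji) (FBs j' j'i)).
Qed.

Lemma exists_unsplit_family : (d < n)%N -> exists i, forall k, ~ split_at i k.
Proof.
move=> lt_dn; have i0 : 'I_n := Ordinal lt_dn.
have at_most_one_split k : exists b, forall i, split_at i k -> i = b.
  have [[i si]|nosplit] := pselect (exists i, split_at i k).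
    by exists i => j sj; exact: split_at_uniq sj si.
  by exists i0 => j sj; case: nosplit; exists j.
have [b split_b] := choice at_most_one_split.
have [i b_neq_i] : exists i, forall k, b k != i.
  by apply: exists_not_in_image; rewrite !card_ord.
by exists i => k /split_b eq_ib; move: (b_neq_i k); rewrite eq_ib eqxx.
Qed.

End CrossIntersectingFamilies.

Theorem lemma1 (R : realType) (d n : nat) (F : 'I_n -> box R d -> Prop) :
  (d.+1 < n)%N ->
  (forall i : 'I_n, exists B : box R d, F i B) ->
  (forall (i j : 'I_n) (B B' : box R d), i != j -> F i B -> F j B' -> boxes_meet B B') ->
  exists (i : 'I_n) (Bs : 'I_n -> box R d),
    (forall j : 'I_n, j != i -> F j (Bs j)) /\
    two_pierceable (fun B : box R d => F i B \/ exists j : 'I_n, j != i /\ B = Bs j).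
Proof.
move=> lt_dn F_ne F_cross.
have [Bs FBs] := choice F_ne.
have [i unsplit_i] := exists_unsplit_family F_cross (ltnW lt_dn).
have [p Fi_p] := unsplit_family_pierced unsplit_i.
have [q Bs_q] := transversal_pierced F_cross (i := i) (fun j _ => FBs j).
exists i, Bs; split=> [j _|]; first exact: FBs.
by exists p, q => B [/Fi_p|/Bs_q]; [left|right].
Qed.
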